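(* Let $n>1$ be odd and let $A\in\mathcal S^{(n-1)\times n}$ be distinguished. The following are equivalent: (1) there exists a homogeneous degree-one $x\in\mathbb Z_2[x_1,\dots,x_{n-1}]$ with $x^2+\mathfrak w^A_2\in\operatorname{span}\{\theta^A_1,\dots,\theta^A_n\}$; (2) $\sigma_2\in\operatorname{span}\{\theta^A_1-x_1^2,\dots,\theta^A_{n-1}-x_{n-1}^2,\theta^A_n\}$, where $\sigma_2=\sum_{1\le k<l\le n-1}x_kx_l$ is the elementary symmetric polynomial of degree 2; (3) there exists $S\in\mathcal P_n$ such that for every $U\in\mathcal P_{n-1}$ (i.e. $U\subseteq\{1,\dots,n-1\}$), $|(J_A(U)+U)\cap S|_2=\binom{|U|}{2}\bmod 2$.
   Context: $\mathcal S=\{0,1,2,3\}$ is the Klein four-group ($\mathbb Z_2$-vector space) with $x+x=0$, $1+2=3$, $1+3=2$, $2+3=1$. A $k\times n$ matrix ($k\le n$) over $\mathcal S$ is distinguished if $A_{ii}=1$ and $A_{ij}\in\{2,3\}$ for $i\ne j$. $\mathcal P_m$ is the power set of $\{1,\dots,m\}$ with $+$ the symmetric difference; $|U|_2=|U|\bmod2$. $J_A(U)=\{j:\sum_{i\in U}A_{ij}=1\}$. Let $\alpha,\beta:\mathcal S\to\mathbb Z_2$ be linear with $\alpha(2)=\beta(3)=1$, $\alpha(3)=\beta(2)=0$; $\alpha_j=\sum_{k=1}^{n-1}\alpha(A_{kj})x_k$, $\beta_j=\sum_{k}\beta(A_{kj})x_k$, $\theta^A_j=\alpha_j\beta_j$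 in $\mathbb Z_2[x_1,\dots,x_{n-1}]$; $\mathfrak w^A=\prod_{j=1}^n(1+\alpha_j+\beta_j)$ and $\mathfrak w^A_2$ is its degree-2 homogeneous part. *)

From HB Require Import structures.
From mathcomp Require Import all_boot all_order all_algebra.
From mathcomp Require Import mpoly.
Set Implicit Arguments. Unset Strict Implicit. Unset Printing Implicit Defensive.
Import Order.TTheory GRing.Theory.
Local Open Scope ring_scope.

(* The Klein four-group S = {0,1,2,3}, represented by 'I_4.  Writing
   k = 2*b1 + b0, addition is bitwise xor: 1+2=3, 1+3=2, 2+3=1, x+x=0. *)
Definition Kl := 'I_4.
Definition kadd (a b : Kl) : Kl :=
  inord ((odd a != odd b) + 2 * ((a %/ 2 != b %/ 2)%N : nat))%N.
Definition k0 : Kl := inord 0.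
Definition k1 : Kl := inord 1.
Definition k2 : Kl := inord 2.
Definition k3 : Kl := inord 3.

Definition distinguished (k n : nat) (A : 'M[Kl]_(k, n)) : Prop :=
  forall (i : 'I_k) (j : 'I_n),
    if val i == val j then A i j = k1 else (A i j = k2 \/ A i j = k3).

(* The linear maps alpha, beta : S -> Z_2 with alpha(2)=beta(3)=1,
   alpha(3)=beta(2)=0 (hence, by linearity, alpha(1)=beta(1)=1, and
   alpha(0)=beta(0)=0). *)
Definition kalpha (a : Kl) : 'F_2 := ((a == k1) || (a == k2))%:R.
Definition kbeta (a : Kl) : 'F_2 := ((a == k1) || (a == k3))%:R.

Section Defs.
Variable n : nat.
Notation P := {mpoly 'F_2[n.-1]}.
Variable A : 'M[Kl]_(n.-1, n).

Definition alphaA (j : 'I_n) : P := \sum_(k < n.-1) kalpha (A k j) *: 'X_k.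
Definition betaA (j : 'I_n) : P := \sum_(k < n.-1) kbeta (A k j) *: 'X_k.
Definition thetaA (j : 'I_n) : P := alphaA j * betaA j.

Definition wA : P := \prod_(j < n) (1 + alphaA j + betaA j).
Definition homog_part (d : nat) (p : P) : P :=
  \sum_(m <- msupp p | mdeg m == d) p@_m *: 'X_[m].
Definition w2A : P := homog_part 2 wA.

Definition JA (U : {set 'I_n.-1}) : {set 'I_n} :=
  [set j | \big[kadd/k0]_(i in U) A i j == k1].

End Defs.

Definition in_span (m k : nat) (f : 'I_k -> {mpoly 'F_2[m]}) (p : {mpoly 'F_2[m]}) : Prop :=
  exists c : 'I_k -> 'F_2, p = \sum_(j < k) c j *: f j.

Definition theta_shift (n : nat) (A : 'M[Kl]_(n.-1, n)) (j : 'I_n) : {mpoly 'F_2[n.-1]} :=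
  match (insub (val j) : option 'I_n.-1) with
  | Some k => thetaA A j - 'X_k ^+ 2
  | None => thetaA A j
  end.

Definition embedU (n : nat) (U : {set 'I_n.-1}) : {set 'I_n} :=
  [set widen_ord (leq_pred n) i | i in U].

(* symmetric difference, the sum of P_n *)
Definition symdiff (T : finType) (X Y : {set T}) : {set T} := (X :\: Y) :|: (Y :\: X).

(* All polynomials in (1) and (2) are quadratic forms over F_2 in m = n - 1
   variables.  We evaluate them at indicator vectors of subsets U of {1..m}: a
   quadratic form over F_2 is determined by its values on the sets of size one
   and two, since these recover its diagonal and its cross coefficients.  The
   values we need are explicit: theta_j(U) = [j in J_A(U)], x_k^2(U) = [k in U],
   sigma_2(U) = C(|U|,2) and, because alpha_j + beta_j = sum_(k <> j) x_k, the
   form w_2 is the second elementary symmetric function of these n linear forms,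
   whence w_2({a,b}) = w_2({a}) + w_2({b}) + 1.  Then (1) <-> (2) follows by
   comparing values on sets of size at most two, and (2) <-> (3) because (3)
   says exactly that the two sides of (2), with coefficients the indicator of
   S, take the same value at every U. *)

From HB Require Import structures.
From mathcomp Require Import all_boot all_order all_algebra.
From mathcomp Require Import mpoly.
From mathcomp Require Import ring zify.
Import GRing.Theory.
Local Open Scope ring_scope.
Set Implicit Arguments. Unset Strict Implicit.

Lemma F2_pchar : 2 \in [pchar 'F_2].
Proof. exact: pchar_Fp. Qed.

Lemma F2_cases (x : 'F_2) : x = 0 \/ x = 1.
Proof. by case: x => [[|[|k]]] //= Hk; [left|right]; apply: val_inj. Qed.

(* This is why x^2 and x agree at 0/1 vectors. *)
Lemma F2_mulxx (x : 'F_2) : x * x = x.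
Proof. by have [->|->] := F2_cases x; rewrite ?mulr0 ?mulr1. Qed.

Lemma F2_natr (k : nat) : (k%:R : 'F_2) = (odd k)%:R.
Proof. by rewrite -Fp_nat_mod // modn2. Qed.

Lemma F2_natr_inj (b1 b2 : bool) : (b1%:R : 'F_2) = b2%:R -> b1 = b2.
Proof. by case: b1; case: b2 => // /(congr1 val). Qed.

Lemma val_k0 : val k0 = 0%N. Proof. by rewrite /= inordK. Qed.
Lemma val_k1 : val k1 = 1%N. Proof. by rewrite /= inordK. Qed.
Lemma val_k2 : val k2 = 2%N. Proof. by rewrite /= inordK. Qed.
Lemma val_k3 : val k3 = 3%N. Proof. by rewrite /= inordK. Qed.
Definition val_kE := (val_k0, val_k1, val_k2, val_k3).

Lemma kalphaE (a : Kl) : kalpha a = ((val a == 1%N) || (val a == 2%N))%:R.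
Proof. by rewrite /kalpha -!val_eqE !val_kE. Qed.

Lemma kbetaE (a : Kl) : kbeta a = ((val a == 1%N) || (val a == 3%N))%:R.
Proof. by rewrite /kbeta -!val_eqE !val_kE. Qed.

Lemma kaddE (a b : Kl) :
  val (kadd a b) = ((odd a != odd b) + 2 * ((a %/ 2 != b %/ 2)%N : nat))%N.
Proof. by rewrite /kadd /= inordK //; case: (odd a != odd b); case: (_ != _). Qed.

Lemma kaddx0 (x : Kl) : kadd x k0 = x.
Proof.
by apply: val_inj; rewrite kaddE val_k0; case: x => [[|[|[|[|x]]]] Hx].
Qed.

Lemma kalphaD (x y : Kl) : kalpha (kadd x y) = kalpha x + kalpha y.
Proof.
rewrite !kalphaE kaddE.
by case: x => [[|[|[|[|x]]]] Hx] //; case: y => [[|[|[|[|y]]]] Hy] //=; apply: val_inj.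
Qed.

Lemma kbetaD (x y : Kl) : kbeta (kadd x y) = kbeta x + kbeta y.
Proof.
rewrite !kbetaE kaddE.
by case: x => [[|[|[|[|x]]]] Hx] //; case: y => [[|[|[|[|y]]]] Hy] //=; apply: val_inj.
Qed.

Lemma kalpha0 : kalpha k0 = 0.
Proof. by rewrite kalphaE !val_kE. Qed.

Lemma kbeta0 : kbeta k0 = 0.
Proof. by rewrite kbetaE !val_kE. Qed.

Lemma kalpha_kbetaM (x : Kl) : kalpha x * kbeta x = (x == k1)%:R.
Proof.
rewrite kalphaE kbetaE -val_eqE !val_kE.
by case: x => [[|[|[|[|x]]]] Hx] //=; apply: val_inj.
Qed.

Lemma kalpha_kbetaD (x : Kl) : kalpha x + kbeta x = (x \notin [:: k0; k1])%:R.
Proof.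
rewrite kalphaE kbetaE !inE -!val_eqE !val_kE.
by case: x => [[|[|[|[|x]]]] Hx] //=; apply: val_inj.
Qed.

Definition ind (T : finType) (U : {set T}) (k : T) : 'F_2 := (k \in U)%:R.

Lemma sum_mul_ind (T : finType) (U : {set T}) (f : T -> 'F_2) :
  \sum_k f k * ind U k = \sum_(k in U) f k.
Proof.
rewrite [RHS]big_mkcond; apply: eq_bigr => k _.
by rewrite /ind; case: (k \in U); rewrite ?mulr1 ?mulr0.
Qed.

Lemma sum_ind (T : finType) (U : {set T}) : \sum_k ind U k = #|U|%:R.
Proof. by rewrite -(eq_bigr _ (fun k _ => mul1r _)) sum_mul_ind sumr_const. Qed.

Lemma sum_set2 (T : finType) (a b : T) (f : T -> 'F_2) :
  a != b -> \sum_(k in [set a; b]) f k = f a + f b.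
Proof. by move=> ab; rewrite big_setU1 ?big_set1 // in_set1. Qed.

Lemma ind_symdiffI (T : finType) (J E S : {set T}) (j : T) :
  ind S j * (ind J j - ind E j) = ind (symdiff J E :&: S) j.
Proof.
rewrite /ind /symdiff in_setI in_setU !in_setD.
case: (j \in S); case: (j \in J); case: (j \in E) => /=;
  by rewrite ?mul0r ?mul1r ?subrr ?subr0 ?sub0r ?(oppr_pchar2 F2_pchar).
Qed.

Notation ev U := (meval (ind U)).

Section Evaluation.
Variable m : nat.
Notation P := {mpoly 'F_2[m]}.

Definition lin (f : 'I_m -> 'F_2) : P := \sum_a f a *: 'X_a.

Lemma lin_homog f : lin f \is 1.-homog.
Proof. by apply: rpred_sum => a _; apply: rpredZ; rewrite dhomogX /= mdeg1. Qed.

Lemma ev_lin U f : ev U (lin f) = \sum_(a in U) f a.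
Proof.
rewrite -sum_mul_ind /lin raddf_sum /=; apply: eq_bigr => a _.
by rewrite mevalZ mevalXU.
Qed.

Lemma mnm1_inj : injective (fun a : 'I_m => U_(a)%MM).
Proof.
move=> a b /(congr1 (fun mm : 'X_{1..m} => mm a)); rewrite !mnm1E eqxx.
by case: eqP => // ->.
Qed.

Lemma homog1_lin (x : P) : x \is 1.-homog -> x = lin (fun a => x@_U_(a)).
Proof.
move=> Hx; apply/mpolyP => mm; rewrite raddf_sum /=.
under eq_bigr do rewrite mcoeffZ mcoeffX.
have [/mdeg1P [k /eqP ->]|nd] := boolP (mdeg mm == 1%N).
  rewrite (bigD1 k) //= eqxx mulr1 big1 ?addr0 // => a ak.
  by rewrite (inj_eq mnm1_inj) (negbTE ak) mulr0.
rewrite (dhomog_nemf_coeff Hx nd) big1 // => a _.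
by case: eqP => [E|]; [move: nd; rewrite -E mdeg1|rewrite mulr0].
Qed.

Lemma ev_linear_pair (x : P) (a b : 'I_m) : x \is 1.-homog -> a != b ->
  ev [set a; b] x = ev [set a] x + ev [set b] x.
Proof. by move=> /homog1_lin -> ab; rewrite !ev_lin sum_set2 // !big_set1. Qed.

Lemma ev_sq U (x : P) : ev U (x ^+ 2) = ev U x.
Proof. by rewrite rmorphXn expr2 F2_mulxx. Qed.

Lemma ev_mesym2 U : ev U (mesym m 'F_2 2) = 'C(#|U|, 2)%:R.
Proof.
have ev_mon h : ev U 'X_[mesym1 h] = (h \subset U)%:R.
  rewrite mevalX; under eq_bigr do rewrite mnmE.
  have [sub|/subsetPn [i hi niU]] := boolP (h \subset U).
    apply: big1 => i _; have [hi|] := boolP (i \in h); last by rewrite expr0.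
    by rewrite expr1 /ind (subsetP sub i hi).
  by rewrite (bigD1 i) //= hi expr1 /ind (negbTE niU) mul0r.
rewrite mesymE raddf_sum /=; under eq_bigr do rewrite ev_mon.
rewrite -cards_draws -sumr_const [RHS]big_mkcond [LHS]big_mkcond.
by apply: eq_bigr => h _; rewrite inE andbC; case: (_ == _); case: (_ \subset _).
Qed.

Lemma mesym2_homog : mesym m 'F_2 2 \is 2.-homog.
Proof.
by rewrite mesymE; apply: rpred_sum => h /eqP Hh; rewrite dhomogX /= mdeg_mesym1 Hh.
Qed.

Lemma ev_span (k : nat) U (f : 'I_k -> P) c :
  ev U (\sum_j c j *: f j) = \sum_j c j * ev U (f j).
Proof. by rewrite raddf_sum /=; apply: eq_bigr => j _; rewrite mevalZ. Qed.

Lemma span_homog (k d : nat) (f : 'I_k -> P) c :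
  (forall j, f j \is d.-homog) -> \sum_j c j *: f j \is d.-homog.
Proof. by move=> Hf; apply: rpred_sum => j _; apply: rpredZ. Qed.

End Evaluation.

Section QuadraticForms.
Variable m : nat.
Notation P := {mpoly 'F_2[m]}.

Definition qform (N : 'I_m -> 'I_m -> 'F_2) : P :=
  \sum_a \sum_b N a b *: ('X_a * 'X_b).

Definition upper (N : 'I_m -> 'I_m -> 'F_2) :=
  forall a b : 'I_m, (b < a)%N -> N a b = 0.

Lemma ev_qform U N : ev U (qform N) = \sum_(a in U) \sum_(b in U) N a b.
Proof.
rewrite /qform raddf_sum /= -sum_mul_ind; apply: eq_bigr => a _.
rewrite raddf_sum /= -sum_mul_ind mulr_suml; apply: eq_bigr => b _.
by rewrite mevalZ mevalM !mevalXU -mulrA [_ * ind U a]mulrC.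
Qed.

Lemma ev_qform1 N a : ev [set a] (qform N) = N a a.
Proof. by rewrite ev_qform !big_set1. Qed.

Lemma ev_qform2 N a b : a != b ->
  ev [set a; b] (qform N) = N a a + N a b + (N b a + N b b).
Proof. by move=> ab; rewrite ev_qform !sum_set2. Qed.

Lemma qformD N1 N2 : qform N1 + qform N2 = qform (fun a b => N1 a b + N2 a b).
Proof.
rewrite -big_split; apply: eq_bigr => a _; rewrite -big_split.
by apply: eq_bigr => b _; rewrite scalerDl.
Qed.

Lemma qformZ c N : c *: qform N = qform (fun a b => c * N a b).
Proof.
rewrite scaler_sumr; apply: eq_bigr => a _; rewrite scaler_sumr.
by apply: eq_bigr => b _; rewrite scalerA.
Qed.

Lemma qform_delta a b : 'X_a * 'X_b = qform (fun i j => ((i == a) && (j == b))%:R).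
Proof.
rewrite /qform (bigD1 a) //= [X in _ + X]big1 => [|i /negbTE ia]; last first.
  by rewrite big1 // => j _; rewrite ia scale0r.
rewrite (bigD1 b) //= !eqxx scale1r addr0 [X in _ + X]big1 ?addr0 // => j /negbTE jb.
by rewrite jb scale0r.
Qed.

Lemma mdeg2P (mm : 'X_{1..m}) : mdeg mm = 2%N -> exists a b, mm = (U_(a) + U_(b))%MM.
Proof.
move=> H; case: (pickP (fun i => (0 < mm i)%N)) => [i Hi|H0]; last first.
  by move: H; rewrite mdegE big1 // => i _; move: (H0 i); rewrite lt0n => /negbFE /eqP.
pose mm' := [multinom (mm j - (i == j))%N | j < m].
have E : mm = (U_(i) + mm')%MM.
  apply/mnmP => j; rewrite mnmDE mnm1E mnmE.
  by have [<-|] := eqVneq i j; [rewrite add1n subn1 prednK|rewrite add0n subn0].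
have /eqP /mdeg1P [k /eqP Hk] : mdeg mm' = 1%N.
  by move: H; rewrite E mdegD mdeg1 add1n => -[].
by exists i, k; rewrite E Hk.
Qed.

Lemma homog2_qform (p : P) : p \is 2.-homog -> exists2 N, upper N & p = qform N.
Proof.
move=> /dhomogP Hp; rewrite (mpolyE p) big_seq.
apply: (big_ind (fun q => exists2 N, upper N & q = qform N)).
- exists (fun _ _ => 0) => //.
  by rewrite /qform big1 // => a _; rewrite big1 // => b _; rewrite scale0r.
- move=> _ _ [N1 U1 ->] [N2 U2 ->]; rewrite qformD.
  by exists (fun a b => N1 a b + N2 a b) => // a b ba; rewrite U1 ?U2 ?addr0.
move=> mm /Hp /mdeg2P [a [b ->]].
wlog le_ab : a b / (a <= b)%N => [hwlog|].
  by case: (leqP a b) => [/hwlog|/ltnW /hwlog]; rewrite // addmC.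
rewrite mpolyXD qform_delta qformZ.
exists (fun i j => p@_(U_(a) + U_(b))%MM * ((i == a) && (j == b))%:R) => // i j ji.
case: (i =P a) => [ia|]; last by rewrite mulr0.
by case: (j =P b) => [jb|]; [move: ji; rewrite ia jb; lia|rewrite andbF mulr0].
Qed.

Lemma homog2_eq (p q : P) : p \is 2.-homog -> q \is 2.-homog ->
  (forall a, ev [set a] p = ev [set a] q) ->
  (forall a b, a != b -> ev [set a; b] p = ev [set a; b] q) -> p = q.
Proof.
move=> /homog2_qform [N1 U1 ->] /homog2_qform [N2 U2 ->] E1 E2.
have diag a : N1 a a = N2 a a by move: (E1 a); rewrite !ev_qform1.
suff E a b : N1 a b = N2 a b.
  by apply: eq_bigr => a _; apply: eq_bigr => b _; rewrite E.
case: (ltngtP a b) => [ab|ba|/val_inj -> //]; last by rewrite U1 ?U2.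
have ne_ab : a != b by rewrite -val_eqE neq_ltn ab.
move: (E2 a b ne_ab); rewrite !ev_qform2 // (U1 b a ab) (U2 b a ab) !add0r !diag.
by move=> /addIr /addrI.
Qed.

End QuadraticForms.

Definition e2 (S : comRingType) (k : nat) (w : nat -> S) : S :=
  \sum_(0 <= j < k) (\sum_(0 <= i < j) w i) * w j.

Section ProductOfLinearForms.
Variables (R : comRingType) (m : nat).
Notation P := {mpoly R[m]}.

Lemma pihomogM (p q : P) e d : q \is e.-homog ->
  pihomog mdeg d (p * q) = if (e <= d)%N then pihomog mdeg (d - e) p * q else 0.
Proof.
move=> Hq; set K := maxn (mmeasure mdeg p) d.+1.
rewrite {1}(pihomog_partitionE (leq_maxl _ d.+1 : mmeasure mdeg p <= K)%N).
rewrite mulr_suml raddf_sum /=.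
have part (i : 'I_K) : pihomog mdeg d (pihomog mdeg i p * q) =
    if (i + e == d)%N then pihomog mdeg i p * q else 0.
  have Hiq := dhomogM (pihomogP mdeg i p) Hq.
  by case: eqP => [<-|/eqP ne]; [exact: pihomog_dE|exact: pihomog_ne0 ne Hiq].
rewrite (eq_bigr _ (fun i _ => part i)); case: leqP => [ed|de].
  have lt : (d - e < K)%N by rewrite leq_max ltnS leq_subr orbT.
  rewrite (bigD1 (Ordinal lt)) //= subnK // eqxx big1 ?addr0 // => i ne.
  by case: eqP => // Hi; case/eqP: ne; apply/val_inj => /=; lia.
by rewrite big1 // => i _; case: eqP => // Hi; lia.
Qed.

Lemma pihomog1 d : pihomog mdeg d (1 : P) = if d == 0%N then 1 else 0.
Proof.
case: eqP => [->|/eqP ne]; first exact/pihomog_dE/dhomog1.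
by apply: pihomog_ne0; [rewrite eq_sym|exact: dhomog1].
Qed.

(* By induction, tracking the parts of degree 0, 1 and 2 simultaneously. *)
Lemma pihomog2_prod (L : nat -> P) k : (forall j, L j \is 1.-homog) ->
  pihomog mdeg 2 (\prod_(0 <= j < k) (1 + L j)) = e2 k L.
Proof.
move=> HL; suff [_ _ ->] : [/\ pihomog mdeg 0 (\prod_(0 <= j < k) (1 + L j)) = 1,
    pihomog mdeg 1 (\prod_(0 <= j < k) (1 + L j)) = \sum_(0 <= j < k) L j
  & pihomog mdeg 2 (\prod_(0 <= j < k) (1 + L j)) = e2 k L] by [].
elim: k => [|k [H0 H1 H2]]; first by rewrite /e2 !big_geq // !pihomog1.
rewrite /e2 !big_nat_recr //= mulrDr mulr1 !raddfD /= !(pihomogM _ _ (HL k)) /=.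
by rewrite H0 H1 H2 mul1r addr0.
Qed.

End ProductOfLinearForms.

Section SecondSymmetricFunction.
Variables (R : comRingType) (k : nat).

Lemma rmorph_e2 (S : comRingType) (f : {rmorphism R -> S}) (w : nat -> R) w' :
  (forall j, f (w j) = w' j) -> f (e2 k w) = e2 k w'.
Proof.
move=> fw; rewrite rmorph_sum; apply: eq_bigr => j _.
rewrite rmorphM rmorph_sum fw; congr (_ * _).
by apply: eq_bigr => i _.
Qed.

Lemma e2D (u v w : nat -> R) : (forall j, w j = u j + v j) ->
  e2 k w = e2 k u + e2 k v +
    (\sum_(0 <= j < k) u j) * (\sum_(0 <= j < k) v j) - \sum_(0 <= j < k) u j * v j.
Proof.
move=> Hw; have sumw l : \sum_(0 <= i < l) w i =
    \sum_(0 <= i < l) u i + \sum_(0 <= i < l) v i.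
  by rewrite -big_split; apply: eq_bigr => i _.
rewrite /e2; elim: k => [|l IH]; first by rewrite !big_geq // !mulr0 !addr0 subr0.
by rewrite !big_nat_recr //= IH sumw Hw; ring.
Qed.

Lemma sum_eqn (a : nat) : \sum_(0 <= j < k) ((a == j)%:R : R) = (a < k)%:R.
Proof.
elim: k => [|l IH]; first by rewrite big_geq.
by rewrite big_nat_recr //= IH ltnS; case: (ltngtP a l); rewrite ?addr0 ?add0r.
Qed.

Lemma sum_neqn (a : nat) : \sum_(0 <= j < k) ((a != j)%:R : R) = k%:R - (a < k)%:R.
Proof.
have -> : (k%:R : R) = \sum_(0 <= j < k) 1 by rewrite sumr_const_nat subn0.
rewrite -sum_eqn -sumrB.
by apply: eq_bigr => j _; case: eqP; rewrite ?subr0 ?subrr.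
Qed.

Lemma sum_neqn2 (a b : nat) : a != b ->
  \sum_(0 <= j < k) ((a != j)%:R * (b != j)%:R : R) = k%:R - (a < k)%:R - (b < k)%:R.
Proof.
have -> : (k%:R : R) = \sum_(0 <= j < k) 1 by rewrite sumr_const_nat subn0.
move=> ab; rewrite -!sum_eqn -!sumrB.
apply: eq_bigr => j _; case: (a =P j) => [aj|_]; case: (b =P j) => [bj|_] //=.
- by rewrite aj bj eqxx in ab.
- by rewrite mul0r subr0 subrr.
- by rewrite mulr0 subr0 subrr.
- by rewrite mulr1 !subr0.
Qed.

End SecondSymmetricFunction.

(* Evaluations of theta_j, theta_j - x_j^2 and w_2.  The hypothesis that A is
   distinguished enters only through J_A({a}) = {a} and through
   alpha_j + beta_j = sum_(k <> j) x_k. *)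

Section MatrixData.
Variables (n : nat) (A : 'M[Kl]_(n.-1, n)).
Hypothesis hA : distinguished A.
Notation m := n.-1.
Notation P := {mpoly 'F_2[n.-1]}.
Notation widen := (widen_ord (leq_pred n)).

Lemma widen_inj : injective widen.
Proof. by move=> a b /(congr1 val) /= /val_inj. Qed.

Lemma distinguished_k1 (a : 'I_m) (j : 'I_n) : (A a j == k1) = (val a == val j).
Proof.
move: (hA a j); case: eqP => [_ ->|_]; first by rewrite eqxx.
by case=> ->; rewrite -val_eqE !val_kE.
Qed.

Lemma ev_alpha U j : ev U (alphaA A j) = kalpha (\big[kadd/k0]_(i in U) A i j).
Proof. by rewrite (big_morph kalpha kalphaD kalpha0) -(ev_lin U (fun k => kalpha (A k j))). Qed.

Lemma ev_beta U j : ev U (betaA A j) = kbeta (\big[kadd/k0]_(i in U) A i j).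
Proof. by rewrite (big_morph kbeta kbetaD kbeta0) -(ev_lin U (fun k => kbeta (A k j))). Qed.

Lemma ev_theta U j : ev U (thetaA A j) = ind (JA A U) j.
Proof. by rewrite mevalM ev_alpha ev_beta kalpha_kbetaM /ind inE. Qed.

Lemma theta_homog j : thetaA A j \is 2.-homog.
Proof. exact: (dhomogM (lin_homog (fun k => kalpha (A k j))) (lin_homog (fun k => kbeta (A k j)))). Qed.

Lemma JA_set1 (a : 'I_m) : JA A [set a] = embedU [set a].
Proof.
apply/setP => j; rewrite /embedU imset_set1 !inE big_set1E kaddx0 distinguished_k1.
by rewrite -val_eqE eq_sym.
Qed.

Lemma embedU_set2 (a b : 'I_m) :
  embedU [set a; b] = [set widen a; widen b].
Proof. by rewrite /embedU imsetU1 imset_set1. Qed.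

Lemma ev_theta_shift U j :
  ev U (theta_shift A j) = ind (JA A U) j - ind (embedU U) j.
Proof.
rewrite /theta_shift; case: insubP => [k _ kj|nj] /=.
  rewrite mevalB ev_theta ev_sq mevalXU; congr (_ - _).
  have -> : j = widen k by apply: val_inj.
  by rewrite /ind /embedU mem_imset //; apply: widen_inj.
rewrite ev_theta /ind; case: imsetP => [[i _ ji]|]; last by rewrite subr0.
by move: nj; rewrite ji /= ltn_ord.
Qed.

Lemma theta_shift_homog j : theta_shift A j \is 2.-homog.
Proof.
rewrite /theta_shift; case: insubP => [k _ _|_] /=; last exact: theta_homog.
apply: rpredB; first exact: theta_homog.
by apply: (dhomogMn (d := 1) 2); rewrite dhomogX /= mdeg1.
Qed.

Lemma ev_span_theta U c :
  ev U (\sum_j c j *: thetaA A j) = \sum_(j in JA A U) c j.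
Proof. by rewrite ev_span -sum_mul_ind; apply: eq_bigr => j _; rewrite ev_theta. Qed.

Lemma ev_span_theta_shift U c : ev U (\sum_j c j *: theta_shift A j) =
  \sum_(j in JA A U) c j - \sum_(j in embedU U) c j.
Proof.
rewrite ev_span -!sum_mul_ind -sumrB; apply: eq_bigr => j _.
by rewrite ev_theta_shift mulrBr.
Qed.

Lemma sum_embedU1 (a : 'I_m) (c : 'I_n -> 'F_2) :
  \sum_(j in embedU [set a]) c j = c (widen a).
Proof. by rewrite /embedU imset_set1 big_set1. Qed.

Lemma sum_embedU2 (a b : 'I_m) (c : 'I_n -> 'F_2) : a != b ->
  \sum_(j in embedU [set a; b]) c j = c (widen a) + c (widen b).
Proof. by move=> ab; rewrite embedU_set2 sum_set2 // (inj_eq widen_inj). Qed.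

Lemma ev_span_ind U (S : {set 'I_n}) :
  ev U (\sum_j ind S j *: theta_shift A j) = #|symdiff (JA A U) (embedU U) :&: S|%:R.
Proof.
rewrite ev_span -sum_ind; apply: eq_bigr => j _.
by rewrite ev_theta_shift ind_symdiffI.
Qed.

Definition off_diag_sum (j : nat) : P := lin (fun k : 'I_m => (val k != j)%:R).

Lemma alpha_beta_sum (j : 'I_n) : alphaA A j + betaA A j = off_diag_sum j.
Proof.
rewrite /alphaA /betaA -big_split; apply: eq_bigr => k _.
rewrite /= -scalerDl kalpha_kbetaD; congr (_%:R *: _).
by move: (hA k j); case: eqP => [_ ->|_ [] ->]; rewrite !inE -!val_eqE !val_kE.
Qed.

Lemma w2A_e2 : w2A A = e2 n off_diag_sum.
Proof.
rewrite /w2A -[homog_part 2 _]/(pihomog mdeg 2 _) -pihomog2_prod; last first.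
  by move=> j; apply: lin_homog.
by rewrite /wA big_mkord; congr pihomog; apply: eq_bigr => j _; rewrite -addrA alpha_beta_sum.
Qed.

(* The key identity: w_2 + sigma_2 has no cross terms. *)
Lemma ev_w2A_pair (a b : 'I_m) : a != b ->
  ev [set a; b] (w2A A) = ev [set a] (w2A A) + ev [set b] (w2A A) + 1.
Proof.
move=> ab; rewrite w2A_e2.
have ev1 (x : 'I_m) : ev [set x] (e2 n off_diag_sum) = e2 n (fun j => (val x != j)%:R).
  by apply: rmorph_e2 => j /=; rewrite ev_lin big_set1.
have ev2 : ev [set a; b] (e2 n off_diag_sum) =
    e2 n (fun j => (val a != j)%:R + (val b != j)%:R).
  by apply: rmorph_e2 => j /=; rewrite ev_lin sum_set2.
rewrite ev2 !ev1.
have an : (val a < n)%N by apply: leq_trans (ltn_ord a) (leq_pred n).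
have bn : (val b < n)%N by apply: leq_trans (ltn_ord b) (leq_pred n).
rewrite (@e2D _ n (fun j => (val a != j)%:R) (fun j => (val b != j)%:R) _ (fun j => erefl)).
rewrite !sum_neqn sum_neqn2 -?val_eqE // an bn -addrA; congr (_ + _).
by have [->|->] := F2_cases (n%:R : 'F_2); apply: val_inj.
Qed.

End MatrixData.

Section Equivalences.
Variables (n : nat) (A : 'M[Kl]_(n.-1, n)).
Hypothesis hA : distinguished A.
Notation m := n.-1.
Notation P := {mpoly 'F_2[n.-1]}.
Notation widen := (widen_ord (leq_pred n)).

Definition cond1 : Prop :=
  exists x : P, x \is 1.-homog /\ in_span (thetaA A) (x ^+ 2 + w2A A).
Definition cond2 : Prop := in_span (theta_shift A) (mesym m 'F_2 2).
Definition cond3 : Prop := exists S : {set 'I_n}, forall U : {set 'I_m},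
  odd #|symdiff (JA A U) (embedU U) :&: S| = odd 'C(#|U|, 2).

Lemma cond1_cond2 : cond1 -> cond2.
Proof.
move=> [x [Hx [c Hc]]]; exists c.
have val_at U : ev U x + ev U (w2A A) = \sum_(j in JA A U) c j.
  by rewrite -ev_span_theta -Hc mevalD ev_sq.
have val_at1 a : ev [set a] x + ev [set a] (w2A A) = c (widen a).
  by rewrite val_at (JA_set1 hA) sum_embedU1.
apply: homog2_eq.
- exact: mesym2_homog.
- by apply: span_homog => j; apply: theta_shift_homog.
- by move=> a; rewrite ev_mesym2 cards1 ev_span_theta_shift (JA_set1 hA) subrr.
move=> a b ab; rewrite ev_mesym2 cards2 ab ev_span_theta_shift -val_at.
rewrite sum_embedU2 // -!val_at1 ev_linear_pair // (ev_w2A_pair hA) // binn.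
by ring.
Qed.

Lemma cond2_cond1 : cond2 -> cond1.
Proof.
move=> [c Hc].
have val_at U : \sum_(j in JA A U) c j =
    'C(#|U|, 2)%:R + \sum_(j in embedU U) c j.
  by rewrite -ev_mesym2 Hc ev_span_theta_shift subrK.
pose f (a : 'I_m) := c (widen a) + ev [set a] (w2A A).
exists (lin f); split; first exact: lin_homog.
exists c; apply: homog2_eq.
- by apply: rpredD; [apply: (dhomogMn (d := 1)); apply: lin_homog|apply: pihomogP].
- by apply: span_homog => j; apply: theta_homog.
- move=> a; rewrite mevalD ev_sq ev_lin big_set1 ev_span_theta val_at.
  by rewrite cards1 sum_embedU1 add0r -addrA (addrr_pchar2 F2_pchar) addr0.
move=> a b ab; rewrite mevalD ev_sq ev_lin sum_set2 // ev_span_theta val_at.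
rewrite cards2 ab binn sum_embedU2 // (ev_w2A_pair hA) // /f.
set ca := c _; set cb := c _; set wa := ev [set a] _; set wb := ev [set b] _.
transitivity (1 + (ca + cb) + (wa + wa) + (wb + wb)); first by ring.
by rewrite !(addrr_pchar2 F2_pchar) !addr0.
Qed.

(* Conditions (2) and (3) are equivalent for any matrix A: (3) says that the
   two sides of (2), with coefficients the indicator of S, agree at every U. *)
Lemma cond2_cond3 : cond2 -> cond3.
Proof.
move=> [c Hc]; exists [set j | c j == 1] => U; apply: F2_natr_inj.
rewrite -[LHS]F2_natr -[RHS]F2_natr -ev_span_ind -ev_mesym2 Hc.
congr (ev U _); apply: eq_bigr => j _.
by rewrite /ind inE; have [->|->] := F2_cases (c j).
Qed.

Lemma cond3_cond2 : cond3 -> cond2.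
Proof.
move=> [S HS]; exists (ind S).
have agree U : ev U (mesym m 'F_2 2) = ev U (\sum_j ind S j *: theta_shift A j).
  by rewrite ev_span_ind ev_mesym2 [LHS]F2_natr [RHS]F2_natr HS.
apply: homog2_eq => [||a|a b _]; rewrite ?agree //.
  exact: mesym2_homog.
by apply: span_homog => j; apply: theta_shift_homog.
Qed.

End Equivalences.

Theorem mainTheorem7 (n : nat) (hn : (1 < n)%N) (hodd : odd n)
  (A : 'M[Kl]_(n.-1, n)) (hA : distinguished A) :
  [/\ ((exists x : {mpoly 'F_2[n.-1]},
          x \is ishomog1 1 (@mdeg n.-1) /\
          in_span (thetaA A) (x ^+ 2 + w2A A)) <->
       in_span (theta_shift A) (mesym n.-1 'F_2 2)),
      (in_span (theta_shift A) (mesym n.-1 'F_2 2) <->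
       exists S : {set 'I_n}, forall U : {set 'I_n.-1},
         odd #|symdiff (JA A U) (embedU U) :&: S| = odd 'C(#|U|, 2))
    & ((exists S : {set 'I_n}, forall U : {set 'I_n.-1},
         odd #|symdiff (JA A U) (embedU U) :&: S| = odd 'C(#|U|, 2)) <->
       (exists x : {mpoly 'F_2[n.-1]},
          x \is ishomog1 1 (@mdeg n.-1) /\
          in_span (thetaA A) (x ^+ 2 + w2A A)))].
Proof.
split; split.
- exact: cond1_cond2.
- exact: cond2_cond1.
- exact: cond2_cond3.
- exact: cond3_cond2.
- by move=> /cond3_cond2 /(cond2_cond1 hA).
- by move=> /(cond1_cond2 hA) /cond2_cond3.
Qed.
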